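(* Let $K=\mathrm{SU}(2)$ and $\mathcal{M}=\{(g_1,h_1,g_2,h_2)\in K^4:[g_1,h_1][g_2,h_2]=I\}/K$. There is a one-to-one correspondence between the subsets $$\{(g,h,h,g)\in K^4 : [g,h]\neq\pm I\}/K$$ and $$\{(g,h,khk^{-1},kgk^{-1})\in K^4 : [g,h]=k^{-1}[g,h]k,\ [g,h]\neq\pm I,\ k^2=-I\}/K$$ of $\mathcal{M}$.
   Context: $[a,b]=aba^{-1}b^{-1}$; $K$ acts on quadruples by simultaneous conjugation and $\mathcal{M}$ is the quotient. Both displayed sets consist of quadruples satisfying $[g_1,h_1][g_2,h_2]=I$, and their images in $\mathcal{M}$ are meant. *)

From HB Require Import structures.
From mathcomp Require Import all_boot all_order all_algebra.
From mathcomp Require Import complex.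
From mathcomp Require Import boolp classical_sets functions reals.
Set Implicit Arguments. Unset Strict Implicit. Unset Printing Implicit Defensive.
Import Order.TTheory GRing.Theory Num.Theory.
Local Open Scope ring_scope.
Local Open Scope classical_set_scope.

Section SU2.
Variable R : realType.
Notation C := (R[i])%C.
Notation mat := 'M[C]_2.

Definition adjmx (A : mat) : mat := (map_mx Num.conj A)^T.

Definition SU2 : set mat := [set A | A *m adjmx A = 1%:M /\ \det A = 1].

Definition comm (a b : mat) : mat := a *m b *m invmx a *m invmx b.

Definition quad := (mat * mat * mat * mat)%type.

Definition conj_quad (k : mat) (q : quad) : quad :=
  let: (g1, h1, g2, h2) := q in
  (k *m g1 *m invmx k, k *m h1 *m invmx k,
   k *m g2 *m invmx k, k *m h2 *m invmx k).

Definition Rep : set quad :=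
  [set q | let: (g1, h1, g2, h2) := q in
     [/\ SU2 g1, SU2 h1, SU2 g2, SU2 h2 & comm g1 h1 *m comm g2 h2 = 1%:M]].

Definition orbitK (q : quad) : set quad :=
  [set q' | exists2 k, SU2 k & q' = conj_quad k q].

Definition Mquot : set (set quad) := orbitK @` Rep.

Definition imM (S : set quad) : set (set quad) := orbitK @` S.

Definition S1 : set quad :=
  [set q | exists g h, [/\ SU2 g, SU2 h, q = (g, h, h, g),
        comm g h != 1%:M & comm g h != - 1%:M]].

Definition S2 : set quad :=
  [set q | exists g h k, [/\ SU2 g, SU2 h, SU2 k,
        q = (g, h, k *m h *m invmx k, k *m g *m invmx k) &
        [/\ comm g h = invmx k *m comm g h *m k,
            comm g h != 1%:M, comm g h != - 1%:M &
            k *m k = - 1%:M]]].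

End SU2.

(* Forgetting the last two entries, (g, h, x, y) |-> (g, h, h, g), commutes with
   simultaneous conjugation and maps the second set onto the first, so it induces a
   map between the two sets of orbits; its inverse is the required bijection.
   Onto: for C = [g, h] in SU(2) with C <> +-I, an element k of SU(2) with k^2 = -I
   commuting with C exists explicitly.  One-to-one on orbits: C is not scalar, so
   its centraliser in M_2 is commutative; for two such k, k' this gives
   (k' k)^2 = I and det (k' k) = 1, whence k' k = +-I, i.e. k' = +-k, and k and -k
   act alike by conjugation. *)

From HB Require Import structures.
From mathcomp Require Import all_boot all_order all_algebra.
From mathcomp Require Import complex.
From mathcomp Require Import boolp classical_sets functions reals.
From mathcomp Require Import ring.
Set Implicit Arguments. Unset Strict Implicit. Unset Printing Implicit Defensive.
Import Order.TTheory GRing.Theory Num.Theory.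
Local Open Scope ring_scope.

Section RingConjugation.
Variable T : unitRingType.
Implicit Types k m c g h x y : T.

Definition conjr k x := k * x / k.
Definition commr g h := g * h / g / h.

Lemma conjrM k : k \is a GRing.unit -> {morph conjr k : x y / x * y}.
Proof. by move=> uk x y; rewrite /conjr !mulrA divrK. Qed.

Lemma conjrV k x : k \is a GRing.unit -> x \is a GRing.unit ->
  (conjr k x)^-1 = conjr k x^-1.
Proof. by move=> uk ux; rewrite /conjr !invrM ?unitrV ?unitrMl // invrK mulrA. Qed.

Lemma conjrJ m k : m \is a GRing.unit -> k \is a GRing.unit ->
  {morph conjr m : x / conjr k x >-> conjr (conjr m k) x}.
Proof. by move=> um uk x; rewrite [RHS]/conjr conjrV // -!conjrM. Qed.

Lemma conjrK k : k \is a GRing.unit -> cancel (conjr k) (conjr k^-1).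
Proof. by move=> uk x; rewrite /conjr invrK !mulrA mulVr // mul1r divrK. Qed.

Lemma conjr_id k x : k \is a GRing.unit -> GRing.comm k x -> conjr k x = x.
Proof. by move=> uk kx; rewrite /conjr kx mulrK. Qed.

Lemma conjr_eq_id k x c : k \is a GRing.unit -> GRing.comm k x ->
  (conjr k c == x) = (c == x).
Proof.
move=> uk kx; rewrite -{1}(conjr_id uk kx).
by rewrite (inj_eq (can_inj (conjrK uk))).
Qed.

Lemma conjrNl k x : conjr (- k) x = conjr k x.
Proof. by rewrite /conjr invrN mulrN mulNr mulNr opprK. Qed.

Lemma commr_conjr k g h : k \is a GRing.unit -> g \is a GRing.unit ->
  h \is a GRing.unit -> commr (conjr k g) (conjr k h) = conjr k (commr g h).
Proof. by move=> uk ug uh; rewrite /commr !conjrV // -!conjrM. Qed.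

Lemma commr_unit g h : g \is a GRing.unit -> h \is a GRing.unit ->
  commr g h \is a GRing.unit.
Proof. by move=> ug uh; rewrite !unitrMr ?unitrV. Qed.

Lemma commrC g h : g \is a GRing.unit -> h \is a GRing.unit ->
  commr h g = (commr g h)^-1.
Proof.
by move=> ug uh; rewrite /commr !invrM ?invrK ?mulrA // ?unitrMl ?unitrV.
Qed.

Lemma comm_conjVP k c : k \is a GRing.unit ->
  (c = k^-1 * c * k) <-> GRing.comm k c.
Proof.
move=> uk; rewrite /GRing.comm; split=> [E | kc].
  by rewrite {1}E !mulrA divrr ?mul1r.
by rewrite -mulrA -kc mulKr.
Qed.

End RingConjugation.

Section Mx2.

Definition mx2 (F : Type) (a b c d : F) : 'M[F]_2 :=
  \matrix_(i, j) if i == 0 :> nat then (if j == 0 :> nat then a else b)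
                 else (if j == 0 :> nat then c else d).

Lemma mx2_eq (F : Type) (A B : 'M[F]_2) :
  A 0 0 = B 0 0 -> A 0 1 = B 0 1 -> A 1 0 = B 1 0 -> A 1 1 = B 1 1 -> A = B.
Proof.
move=> e00 e01 e10 e11; apply/matrixP => i j.
have ord2 (k : 'I_2) : k = 0 \/ k = 1.
  by case: k => -[|[|//]] ?; [left|right]; apply: val_inj.
by case: (ord2 i) => ->; case: (ord2 j) => ->.
Qed.

Lemma mx2E (F : Type) (A : 'M[F]_2) : A = mx2 (A 0 0) (A 0 1) (A 1 0) (A 1 1).
Proof. by apply: mx2_eq; rewrite mxE. Qed.

Lemma mx2_inj (F : Type) (a b c d a' b' c' d' : F) :
  mx2 a b c d = mx2 a' b' c' d' -> [/\ a = a', b = b', c = c' & d = d'].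
Proof.
move=> /matrixP E.
by split; [move: (E 0 0) | move: (E 0 1) | move: (E 1 0) | move: (E 1 1)]; rewrite !mxE.
Qed.

Lemma mul_mx2 (F : pzRingType) (a b c d a' b' c' d' : F) :
  mx2 a b c d *m mx2 a' b' c' d' =
  mx2 (a * a' + b * c') (a * b' + b * d') (c * a' + d * c') (c * b' + d * d').
Proof.
by apply: mx2_eq; rewrite !mxE !big_ord_recl big_ord0 !mxE /= addr0.
Qed.

Lemma det_mx2 (F : comPzRingType) (a b c d : F) :
  \det (mx2 a b c d) = a * d - b * c.
Proof.
rewrite (expand_det_row _ 0) !big_ord_recl big_ord0 addr0 /cofactor !det_mx11.
by rewrite !mxE /= /bump /= !add0n expr0 expr1 !mul1r mulN1r mulrN.
Qed.

Lemma scalar_mx2 (F : pzRingType) (a : F) : a%:M = mx2 a 0 0 a.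
Proof. by apply: mx2_eq; rewrite !mxE. Qed.

Lemma opp_mx2 (F : pzRingType) (a b c d : F) :
  - mx2 a b c d = mx2 (- a) (- b) (- c) (- d).
Proof. by apply: mx2_eq; rewrite !mxE. Qed.

Lemma mx2_nonscalar (F : pzRingType) (C : 'M[F]_2) : ~~ is_scalar_mx C ->
  [\/ C 0 1 != 0, C 1 0 != 0 | C 0 0 != C 1 1].
Proof.
move=> nsC; have [c01|] := eqVneq (C 0 1) 0; last by constructor 1.
have [c10|] := eqVneq (C 1 0) 0; last by constructor 2.
have [c11|] := eqVneq (C 0 0) (C 1 1); last by constructor 3.
case/is_scalar_mxP: nsC; exists (C 0 0).
by rewrite {1}(mx2E C) scalar_mx2 c01 c10 c11.
Qed.

End Mx2.

Lemma eq_of_subr (V : zmodType) (x y l r : V) : l = r -> x - y = l - r -> x = y.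
Proof. by move=> ->; rewrite subrr => /subr0_eq. Qed.

Section Commutant.
Variable F : fieldType.

Lemma eq_divr (x c y : F) : c != 0 -> x * c = y -> x = y / c.
Proof. by move=> c0 <-; rewrite mulfK. Qed.

Lemma mx2_cent_comm (A B C : 'M[F]_2) : ~~ is_scalar_mx C ->
  GRing.comm A C -> GRing.comm B C -> GRing.comm A B.
Proof.
move=> /mx2_nonscalar nsC; rewrite /GRing.comm -!mulmxE (mx2E A) (mx2E B) (mx2E C).
move: nsC.
move: (A 0 0) (A 0 1) (A 1 0) (A 1 1) (B 0 0) (B 0 1) (B 1 0) (B 1 1)
  (C 0 0) (C 0 1) (C 1 0) (C 1 1) => a1 a2 a3 a4 b1 b2 b3 b4 c1 c2 c3 c4.
rewrite !mul_mx2 => nsC AC BC.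
have [p1 p2 p3 _] := mx2_inj AC; have [q1 q2 q3 _] := mx2_inj BC.
case: nsC => [c2n|c3n|dn].
- have e1 : a1 = (c1 * a2 + c2 * a4 - a2 * c4) / c2.
    by apply: eq_divr => //; apply: (eq_of_subr p2); ring.
  have e3 : a3 = (a2 * c3) / c2.
    by apply: eq_divr => //; apply: (eq_of_subr (esym p1)); ring.
  have f1 : b1 = (c1 * b2 + c2 * b4 - b2 * c4) / c2.
    by apply: eq_divr => //; apply: (eq_of_subr q2); ring.
  have f3 : b3 = (b2 * c3) / c2.
    by apply: eq_divr => //; apply: (eq_of_subr (esym q1)); ring.
  by subst a1 a3 b1 b3; congr mx2; field.
- have e1 : a1 = (a3 * c1 + a4 * c3 - c4 * a3) / c3.
    by apply: eq_divr => //; apply: (eq_of_subr (esym p3)); ring.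
  have e2 : a2 = (c2 * a3) / c3.
    by apply: eq_divr => //; apply: (eq_of_subr p1); ring.
  have f1 : b1 = (b3 * c1 + b4 * c3 - c4 * b3) / c3.
    by apply: eq_divr => //; apply: (eq_of_subr (esym q3)); ring.
  have f2 : b2 = (c2 * b3) / c3.
    by apply: eq_divr => //; apply: (eq_of_subr q1); ring.
  by subst a1 a2 b1 b2; congr mx2; field.
- have dn' : c1 - c4 != 0 by rewrite subr_eq0.
  have e2 : a2 = ((a1 - a4) * c2) / (c1 - c4).
    by apply: eq_divr => //; apply: (eq_of_subr (esym p2)); ring.
  have e3 : a3 = ((a1 - a4) * c3) / (c1 - c4).
    by apply: eq_divr => //; apply: (eq_of_subr p3); ring.
  have f2 : b2 = ((b1 - b4) * c2) / (c1 - c4).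
    by apply: eq_divr => //; apply: (eq_of_subr (esym q2)); ring.
  have f3 : b3 = ((b1 - b4) * c3) / (c1 - c4).
    by apply: eq_divr => //; apply: (eq_of_subr q3); ring.
  by subst a2 a3 b2 b3; congr mx2; field.
Qed.

(* Fails in characteristic 2, e.g. for the unipotent matrix [[1, 1], [0, 1]]. *)
Lemma mx2_involution_det1 (u : 'M[F]_2) : 2 != 0 :> F ->
  u * u = 1 -> \det u = 1 -> u = 1 \/ u = -1.
Proof.
move=> two_neq0; rewrite -mulmxE -idmxE (mx2E u) det_mx2 mul_mx2 scalar_mx2.
move: (u 0 0) (u 0 1) (u 1 0) (u 1 1) => p q r s E Ed.
have [e1 e2 e3 e4] := mx2_inj E.
have t1 : p * (p + s) = 2 by rewrite -[2]/(1 + 1) -{1}e1 -Ed; ring.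
have t4 : s * (p + s) = 2 by rewrite -[2]/(1 + 1) -{1}e4 -Ed; ring.
have ps : p + s != 0 by apply: contra_neq two_neq0 => ps0; rewrite -t1 ps0 mulr0.
have q0 : q = 0.
  by apply/eqP; rewrite -(mulIr_eq0 _ (mulIf ps)) -e2; apply/eqP; ring.
have r0 : r = 0.
  by apply/eqP; rewrite -(mulIr_eq0 _ (mulIf ps)) -e3; apply/eqP; ring.
have sp : s = p by apply: (mulIf ps); rewrite t1 t4.
subst q r s; rewrite mulr0 addr0 in e1.
have /orP[/eqP-> | /eqP->] : (p == 1) || (p == -1) by rewrite -sqrf_eq1 expr2 e1.
  by left.
by right; rewrite opp_mx2 oppr0.
Qed.

End Commutant.

Section SU2Group.
Variable R : realType.
Local Notation C := (R[i])%C.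
Local Notation mat := 'M[C]_2.
Implicit Types (a b x y : C) (A B c g h k m : mat).

Lemma adj_mx2 a b x y : adjmx (mx2 a b x y) = mx2 a^* x^* b^* y^*.
Proof. by apply: mx2_eq; rewrite !mxE. Qed.

Lemma SU2_mx2 a b : a * a^* + b * b^* = 1 -> SU2 (mx2 a b (- b^*) a^*).
Proof.
move=> ab1; split; last by rewrite det_mx2 -ab1; ring.
rewrite adj_mx2 mul_mx2 scalar_mx2 rmorphN /= !conjCK -ab1.
by congr mx2; ring.
Qed.

Lemma SU2_mx2_form A : SU2 A ->
  exists a b, A = mx2 a b (- b^*) a^* /\ a * a^* + b * b^* = 1.
Proof.
case; rewrite (mx2E A) adj_mx2 mul_mx2 scalar_mx2 det_mx2.
move: (A 0 0) (A 0 1) (A 1 0) (A 1 1) => a b x y E det1.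
have [aa1 ax0 xa0 _] := mx2_inj E.
have Ex : x = - b^* * (a * y - b * x) - x * (a * a^* + b * b^* - 1)
              + a * (x * a^* + y * b^*) by ring.
have Ey : y = a^* * (a * y - b * x) - y * (a * a^* + b * b^* - 1)
              + b * (x * a^* + y * b^*) by ring.
rewrite det1 aa1 xa0 subrr !mulr0 !mulr1 !subr0 !addr0 in Ex Ey.
by exists a, b; rewrite Ex Ey; split.
Qed.

Lemma SU2_unit A : SU2 A -> A \is a GRing.unit.
Proof. by case=> /mulmx1_unit[]. Qed.

Lemma SU2_inv A : SU2 A -> A^-1 = adjmx A.
Proof.
move=> SA; have uA := SU2_unit SA; case: SA => AA _.
by rewrite -[LHS]mulr1 -idmxE -AA mulmxE mulrA mulVr ?mul1r.
Qed.

Lemma SU2_1 : SU2 (1 : mat).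
Proof.
have -> : 1 = mx2 1 0 (- 0^*) 1^* :> mat.
  by rewrite -idmxE scalar_mx2 rmorph0 rmorph1 oppr0.
by apply: SU2_mx2; rewrite rmorph0 rmorph1 mulr0 addr0 mulr1.
Qed.

Lemma SU2M A B : SU2 A -> SU2 B -> SU2 (A * B).
Proof.
case/SU2_mx2_form=> a [b [-> ab1]] /SU2_mx2_form[x [y [-> xy1]]]; rewrite -mulmxE mul_mx2.
have -> : mx2 (a * x + b * - y^*) (a * y + b * x^*) (- b^* * x + a^* * - y^*)
   (- b^* * y + a^* * x^*) =
  mx2 (a * x - b * y^*) (a * y + b * x^*) (- (a * y + b * x^*)^*) (a * x - b * y^*)^*.
  by rewrite !rmorphD !rmorphN !rmorphM /= !conjCK; congr mx2; ring.
apply: SU2_mx2; rewrite !rmorphD !rmorphN !rmorphM /= !conjCK.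
by rewrite -[1]mulr1 -{1}ab1 -xy1; ring.
Qed.

Lemma SU2V A : SU2 A -> SU2 A^-1.
Proof.
move=> SA; rewrite SU2_inv //; case/SU2_mx2_form: SA => a [b [-> ab1]].
rewrite adj_mx2 rmorphN /= !conjCK.
have -> : mx2 a^* (- b) b^* a = mx2 a^* (- b) (- (- b)^*) a^*^*.
  by rewrite rmorphN /= opprK conjCK.
by apply: SU2_mx2; rewrite rmorphN /= conjCK -ab1; ring.
Qed.

Lemma SU2_conjr m A : SU2 m -> SU2 A -> SU2 (conjr m A).
Proof. by move=> Sm SA; apply: SU2M; [apply: SU2M | apply: SU2V]. Qed.

Lemma SU2_commr g h : SU2 g -> SU2 h -> SU2 (commr g h).
Proof. by move=> Sg Sh; do !apply: SU2M => //; apply: SU2V. Qed.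

Lemma SU2_nonscalar c : SU2 c -> c != 1 -> c != -1 -> ~~ is_scalar_mx c.
Proof.
case=> _ det1 n1 nN1; apply/is_scalar_mxP => -[a ca].
move: det1; rewrite ca det_scalar => /eqP; rewrite sqrf_eq1 => /orP[]/eqP a1.
  by move: n1; rewrite ca a1 eqxx.
by move: nN1; rewrite ca a1 raddfN eqxx.
Qed.

Lemma SU2_traceless_sqrN1 x y : x^* = - x -> x * x^* + y * y^* = 1 ->
  let k := mx2 x y (- y^*) x^* in SU2 k /\ k * k = -1.
Proof.
move=> xN xy1; split; first exact: SU2_mx2.
rewrite -mulmxE -idmxE mul_mx2 scalar_mx2 opp_mx2 oppr0 -xy1 xN.
by congr mx2; ring.
Qed.

Definition sqrtN1_cent c : set mat :=
  [set k | [/\ SU2 k, k * k = -1 & GRing.comm k c]].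

Lemma sqrtN1_cent_unique c k k' : SU2 c -> c != 1 -> c != -1 ->
  sqrtN1_cent c k -> sqrtN1_cent c k' -> k' = k \/ k' = - k.
Proof.
move=> Sc n1 nN1 [Sk kk kc] [Sk' kk' k'c].
have kk'C : GRing.comm k k' := mx2_cent_comm (SU2_nonscalar Sc n1 nN1) kc k'c.
have kV : k' = - (k' * k) * k.
  by rewrite mulNr -mulrA kk mulrN1 opprK.
have sqr1 : k' * k * (k' * k) = 1.
  by rewrite -!mulrA (mulrA k k') kk'C -mulrA kk mulrN1 mulrN kk' opprK.
have det1 : \det (k' * k) = 1 by rewrite -mulmxE det_mulmx Sk.2 Sk'.2 mulr1.
have two_neq0 : 2 != 0 :> C by rewrite pnatr_eq0.
have [E|E] := mx2_involution_det1 two_neq0 sqr1 det1; rewrite kV E.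
  by right; rewrite mulN1r.
by left; rewrite opprK mul1r.
Qed.

(* If c = [[a, b], [-b^*, a^*]], then k is (c - c^-1) / 2 normalised. *)
Lemma sqrtN1_cent_exists c : SU2 c -> c != 1 -> c != -1 ->
  exists k, sqrtN1_cent c k.
Proof.
move=> Sc n1 nN1; have nsc := SU2_nonscalar Sc n1 nN1.
have [a [b [Ec _]]] := SU2_mx2_form Sc.
have two_neq0 : 2 != 0 :> C by rewrite pnatr_eq0.
pose x := (a - a^*) / 2; have xE : x = (a - a^*) / 2 by [].
have xN : x^* = - x by rewrite fmorph_div rmorphB /= conjCK rmorph_nat /x -mulNr opprB.
clearbody x; pose n := x * x^* + b * b^*.
have n_neq0 : n != 0.
  apply: contraNneq nsc => /eqP; rewrite paddr_eq0 ?mul_conjC_ge0 //.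
  rewrite !mul_conjC_eq0 xE mulf_eq0 invr_eq0 (negPf two_neq0) orbF subr_eq0.
  case/andP => /eqP aa /eqP b0; apply/is_scalar_mxP; exists a.
  by rewrite Ec scalar_mx2 b0 rmorph0 oppr0 -aa.
pose s := sqrtC n.
have s_neq0 : s != 0 by rewrite sqrtC_eq0.
have sR : s^* = s by rewrite conj_Creal // sqrtC_real // addr_ge0 ?mul_conjC_ge0.
have [Sk kk] : let k := mx2 (x / s) (b / s) (- (b / s)^*) (x / s)^* in
               SU2 k /\ k * k = -1.
  apply: SU2_traceless_sqrN1; first by rewrite fmorph_div /= sR xN mulNr.
  rewrite !fmorph_div /= sR.
  have -> : x / s * (x^* / s) + b / s * (b^* / s) = n / s ^+ 2 by rewrite /n; field.
  by rewrite sqrtCK divff.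
exists (mx2 (x / s) (b / s) (- (b / s)^*) (x / s)^*); split => //.
rewrite /GRing.comm Ec -mulmxE !mul_mx2 !fmorph_div /= sR xN xE.
by congr mx2; field.
Qed.
End SU2Group.

Local Open Scope classical_set_scope.

Section Quadruples.
Variable R : realType.
Local Notation mat := 'M[R[i]]_2.
Local Notation quad := (quad R).
Implicit Types (q : quad) (c g h k m : mat).

Lemma conj_quadE m g h x y :
  conj_quad m (g, h, x, y) = (conjr m g, conjr m h, conjr m x, conjr m y).
Proof. by []. Qed.

Lemma conj_quad1 q : conj_quad 1 q = q.
Proof. by case: q => [[[g h] x] y]; rewrite conj_quadE /conjr invr1 !mul1r !mulr1. Qed.

Lemma conj_quadM k m q : SU2 k -> SU2 m ->
  conj_quad k (conj_quad m q) = conj_quad (k * m) q.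
Proof.
move=> /SU2_unit uk /SU2_unit um; case: q => [[[g h] x] y].
by rewrite !conj_quadE /conjr invrM // !mulrA.
Qed.

Lemma orbitK_refl q : orbitK q q.
Proof. by exists 1; [exact: SU2_1 | rewrite conj_quad1]. Qed.

Lemma orbitK_eq q q' : orbitK q q' -> orbitK q' = orbitK q.
Proof.
case=> k Sk ->; apply/seteqP; split=> _ [m Sm ->].
  by exists (m * k); [exact: SU2M | rewrite conj_quadM].
have Smk : SU2 (m / k) by apply: SU2M => //; apply: SU2V.
by exists (m / k); rewrite // conj_quadM // divrK ?SU2_unit.
Qed.

Lemma image_orbitK (f : quad -> quad) q :
  (forall k q, f (conj_quad k q) = conj_quad k (f q)) ->
  f @` orbitK q = orbitK (f q).
Proof.
move=> f_equiv; apply/seteqP; split=> [_ [_ [k Sk ->] <-] | _ [k Sk ->]].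
  by exists k; rewrite ?f_equiv.
by exists (conj_quad k q); [exists k | rewrite f_equiv].
Qed.

Lemma commE g h : comm g h = commr g h.
Proof. by []. Qed.

Definition noncentral_comm g h :=
  [/\ SU2 g, SU2 h, comm g h != 1%:M & comm g h != - 1%:M].

Definition fold_quad q : quad := let: (g, h, _, _) := q in (g, h, h, g).

Lemma fold_quad_conj k q : fold_quad (conj_quad k q) = conj_quad k (fold_quad q).
Proof. by case: q => [[[g h] x] y]. Qed.

Lemma S1E q : S1 q <-> exists g h, noncentral_comm g h /\ q = (g, h, h, g).
Proof.
split=> [[g [h [Sg Sh -> n1 nN1]]] | [g [h [[Sg Sh n1 nN1] ->]]]].
  by exists g, h.
by exists g, h.
Qed.

Lemma S2E q : S2 q <-> exists g h k,
  [/\ noncentral_comm g h, sqrtN1_cent (comm g h) k & q = (g, h, conjr k h, conjr k g)].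
Proof.
split=> [[g [h [k [Sg Sh Sk -> [kc n1 nN1 kk]]]]]
        | [g [h [k [[Sg Sh n1 nN1] [Sk kk kc] ->]]]]].
  exists g, h, k; split; [exact: And4 | | by []].
  by split; [exact: Sk | exact: kk | apply/(comm_conjVP _ (SU2_unit Sk))].
exists g, h, k; split; [exact: Sg | exact: Sh | exact: Sk | by [] |].
by split; [apply/(comm_conjVP _ (SU2_unit Sk)) | exact: n1 | exact: nN1 | exact: kk].
Qed.

Lemma noncentral_comm_conj m g h : SU2 m -> noncentral_comm g h ->
  noncentral_comm (conjr m g) (conjr m h).
Proof.
move=> Sm [Sg Sh n1 nN1]; have um := SU2_unit Sm.
split; [exact: SU2_conjr | exact: SU2_conjr | idtac | idtac];
  rewrite commE (commr_conjr um (SU2_unit Sg) (SU2_unit Sh)).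
  by rewrite (conjr_eq_id _ um (commr1 m)).
by rewrite (conjr_eq_id _ um (commrN1 m)).
Qed.

Lemma sqrtN1_cent_conj m c k : SU2 m -> sqrtN1_cent c k ->
  sqrtN1_cent (conjr m c) (conjr m k).
Proof.
move=> Sm [Sk kk kc]; have um := SU2_unit Sm.
split; first exact: SU2_conjr.
  by rewrite -(conjrM um) kk (conjr_id um (commrN1 m)).
by rewrite /GRing.comm -!(conjrM um) kc.
Qed.

Lemma S1_Rep q : S1 q -> Rep q.
Proof.
case/S1E=> g [h [[Sg Sh _ _] ->]]; split; try assumption.
have [ug uh] := (SU2_unit Sg, SU2_unit Sh).
change (commr g h * commr h g = 1).
by rewrite (commrC ug uh) (divrr (commr_unit ug uh)).
Qed.

Lemma S2_Rep q : S2 q -> Rep q.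
Proof.
case/S2E=> g [h [k [[Sg Sh _ _] [Sk _ kc] ->]]].
split; [exact: Sg | exact: Sh | exact: SU2_conjr | exact: SU2_conjr | idtac].
have ug := SU2_unit Sg; have uh := SU2_unit Sh; have uk := SU2_unit Sk.
change (commr g h * commr (conjr k h) (conjr k g) = 1).
rewrite (commr_conjr uk uh ug) (commrC ug uh) (conjr_id uk (commrV kc)).
exact: divrr (commr_unit ug uh).
Qed.

Lemma S2_conj m q : SU2 m -> S2 q -> S2 (conj_quad m q).
Proof.
move=> Sm /S2E[g [h [k [[Sg Sh n1 nN1] ck ->]]]]; apply/S2E.
have um := SU2_unit Sm; have ug := SU2_unit Sg; have uh := SU2_unit Sh.
have uk : k \is a GRing.unit by case: ck => Sk _ _; exact: SU2_unit.
exists (conjr m g), (conjr m h), (conjr m k); split.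
- exact: noncentral_comm_conj.
- by rewrite commE (commr_conjr um ug uh); apply: sqrtN1_cent_conj.
- by rewrite conj_quadE !(conjrJ um uk).
Qed.

Lemma fold_S2 q : S2 q -> S1 (fold_quad q).
Proof. by case/S2E=> g [h [k [gh _ ->]]]; apply/S1E; exists g, h. Qed.

Lemma S1_fold_S2 q : S1 q -> exists2 q', S2 q' & fold_quad q' = q.
Proof.
case/S1E=> g [h [[Sg Sh n1 nN1] ->]].
have [k ck] := sqrtN1_cent_exists (SU2_commr Sg Sh) n1 nN1.
by exists (g, h, conjr k h, conjr k g) => //; apply/S2E; exists g, h, k.
Qed.

Lemma fold_S2_inj q q' : S2 q -> S2 q' -> fold_quad q = fold_quad q' -> q = q'.
Proof.
case/S2E=> g [h [k [[Sg Sh n1 nN1] ck ->]]].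
case/S2E=> g' [h' [k' [_ ck' ->]]] /= [Eg Eh _ _]; subst g' h'.
have Sc : SU2 (comm g h) by apply: SU2_commr.
have [->|->] := sqrtN1_cent_unique Sc n1 nN1 ck ck'; first by [].
by rewrite !conjrNl.
Qed.

Definition fold_orbit (O : set quad) : set quad := fold_quad @` O.

Lemma fold_orbitE q : fold_orbit (orbitK q) = orbitK (fold_quad q).
Proof. by apply: image_orbitK => k {}q; apply: fold_quad_conj. Qed.

Lemma fold_orbit_bij : set_bij (imM (@S2 R)) (imM (@S1 R)) fold_orbit.
Proof.
split.
- by move=> _ [q Sq <-]; exists (fold_quad q); [exact: fold_S2 | rewrite fold_orbitE].
- move=> _ _ /set_mem[q Sq <-] /set_mem[q' Sq' <-].
  rewrite !fold_orbitE => E.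
  have [m Sm Eq'] : orbitK (fold_quad q) (fold_quad q').
    by rewrite E; apply: orbitK_refl.
  rewrite -fold_quad_conj in Eq'.
  rewrite (fold_S2_inj Sq' (S2_conj Sm Sq) Eq').
  by apply/esym/orbitK_eq; exists m.
- move=> _ [q /S1_fold_S2[q' Sq' Eq] <-]; rewrite -Eq.
  by exists (orbitK q'); [exists q' | rewrite fold_orbitE].
Qed.

End Quadruples.

Theorem mainTheorem11 (R : realType) :
  imM (@S1 R) `<=` @Mquot R /\ imM (@S2 R) `<=` @Mquot R /\
  exists f : set (quad R) -> set (quad R),
    set_bij (imM (@S1 R)) (imM (@S2 R)) f.
Proof.
split; first by move=> _ [q /S1_Rep Rq <-]; exists q.
split; first by move=> _ [q /S2_Rep Rq <-]; exists q.
exists (pinv_ (fun=> set0) (imM (@S2 R)) (@fold_orbit R)).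
exact/bijpinv_bij/fold_orbit_bij.
Qed.
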